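(* Let $\mathfrak{g}=\mathfrak{W}\oplus\mathfrak{W}$ be the direct sum of two copies of the Witt algebra and let $\bigwedge^2\mathfrak{g}$ carry the $\mathfrak{g}$-module structure induced by the adjoint action. Then $$H^1\big(\mathfrak{W}\oplus\mathfrak{W},\textstyle\bigwedge^2(\mathfrak{W}\oplus\mathfrak{W})\big)=\{0\}.$$ Equivalently: for every linear map $\delta:\mathfrak{g}\to\bigwedge^2\mathfrak{g}$ satisfying $\delta([x,y])=x\cdot\delta(y)-y\cdot\delta(x)$ for all $x,y\in\mathfrak{g}$, there exists $r\in\bigwedge^2\mathfrak{g}$ with $\delta(x)=x\cdot r$ for all $x\in\mathfrak{g}$.
   Context: The Witt algebra $\mathfrak{W}$ is the complex Lie algebra with basis $\{L_m : m\in\mathbb{Z}\}$ and bracket $[L_m,L_n]=(m-n)L_{m+n}$. The algebra $\mathfrak{W}\oplus\mathfrak{W}$ has basis $\{L_m,\bar L_m: m\in\mathbb{Z}\}$ with $[L_m,L_n]=(m-n)L_{m+n}$, $[\bar L_m,\bar L_n]=(m-n)\bar L_{m+n}$, $[L_m,\bar L_n]=0$. For a Lie algebra $\mathfrak{g}$, $\bigwedge^2\mathfrak{g}$ (finite sums of $a\wedge b=a\otimes b-b\otimes a$) is a $\mathfrak{g}$-module via $x\cdot(a\wedge b)=[x,a]\wedge b+a\wedge[x,b]$. A 1-cocycle is a linear map $\delta:\mathfrak{g}\to\bigwedge^2\mathfrak{g}$ with $\delta([x,y])=x\cdot\delta(y)-y\cdot\delta(x)$; a 1-coboundary is a map $x\mapsto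 x\cdot r$ for fixed $r\in\bigwedge^2\mathfrak{g}$; $H^1$ is the quotient of cocycles by coboundaries. *)

From HB Require Import structures.
From mathcomp Require Import all_boot all_algebra.
From mathcomp Require Import Rstruct.
From mathcomp.real_closed Require Import complex.
From mathcomp Require Import finmap.
From mathcomp.multinomials Require Import monalg.

Set Implicit Arguments.
Unset Strict Implicit.
Unset Printing Implicit Defensive.

Import GRing.Theory.
Local Open Scope ring_scope.

Definition C : fieldType := complex Rdefinitions.R.

(* Basis index of W (+) W: (false, m) ~ L_m, (true, m) ~ \bar L_m. *)
Definition WWidx : Type := (bool * int)%type.

Definition WW : Type := {malg C[WWidx]}.

(* The tensor square g (x) g, with basis e_i (x) e_j indexed by pairs. *)
Definition WW2 : Type := {malg C[(WWidx * WWidx)%type]}.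

Definition e (i : WWidx) : WW := << i >>.

(* Bracket of basis vectors:
   [L_m,L_n]=(m-n)L_{m+n}, [\bar L_m,\bar L_n]=(m-n)\bar L_{m+n},
   [L_m,\bar L_n]=[\bar L_m, L_n]=0. *)
Definition brb (i j : WWidx) : WW :=
  if i.1 == j.1 then ((i.2 - j.2)%:~R : C) *: e (i.1, i.2 + j.2) else 0.

Definition br (x y : WW) : WW :=
  \sum_(i <- msupp x) \sum_(j <- msupp y) (x@_i * y@_j) *: brb i j.

Definition tens (a b : WW) : WW2 :=
  \sum_(i <- msupp a) \sum_(j <- msupp b) (a@_i * b@_j) *: << (i, j) >>.

Definition wedge (a b : WW) : WW2 := tens a b - tens b a.

(* /\^2 g : the finite sums of elements a /\ b *)
Definition in_wedge2 (t : WW2) : Prop :=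
  exists s : seq (WW * WW), t = \sum_(p <- s) wedge p.1 p.2.

(* The (adjoint-induced) action of g on g (x) g, extended linearly from
   x.(a (x) b) = [x,a] (x) b + a (x) [x,b]; on /\^2 g it gives
   x.(a /\ b) = [x,a] /\ b + a /\ [x,b]. *)
Definition act (x : WW) (t : WW2) : WW2 :=
  \sum_(k <- msupp t)
     t@_k *: (tens (br x (e k.1)) (e k.2) + tens (e k.1) (br x (e k.2))).

From HB Require Import structures.
From mathcomp Require Import all_boot all_algebra.
From mathcomp Require Import Rstruct.
From mathcomp.real_closed Require Import complex.
From mathcomp Require Import finmap.
From mathcomp.multinomials Require Import monalg.
From mathcomp Require Import ring zify.
Import GRing.Theory Num.Theory.
Local Open Scope ring_scope.

(* A 1-cocycle delta is determined by the coefficient arrays d k of the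
   delta(e_k) on the basis e_p (x) e_q; the cocycle identity, antisymmetry
   and finiteness of support become statements about these arrays
   ([cocycle_coef], [antisym], [fin_bisupport]), and coboundaries become the
   arrays [basis_act k r].  The coefficient statement [cocycle_coef_exact]
   is proved by subtracting coboundaries in three steps:
   1. kill delta(L_0) and delta(\bar L_0), after which every delta(e_k) is
      concentrated in the weight of e_k ([weight_support]);
   2. kill the mixed components with the coboundary of L_0 /\ \bar L_0;
   3. solve each copy of W separately ([witt_H1]), which rests on a rigidity
      result for Witt cocycles ([witt_rigidity]) proved by propagating
      vanishing along two-term recurrences. *)

Lemma intrC_neq0 (z : int) : z != 0 -> (z%:~R : C) != 0.
Proof. by rewrite intr_eq0. Qed.

Lemma mul_intrC_eq0 (z : int) (x : C) : z != 0 -> z%:~R * x = 0 -> x = 0.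
Proof. by move=> /intrC_neq0 hz /eqP; rewrite mulf_eq0 (negPf hz) => /eqP. Qed.

(* An equation u = v follows from an equation x = y whenever u - v is a
   multiple of x - y; all coefficient identities below are derived this way
   from instances of the cocycle identity, with [ring] proving the premise. *)
Lemma eq_via (c : C) {x y u v : C} : x = y -> u - v = c * (x - y) -> u = v.
Proof. by move=> -> /eqP; rewrite subrr mulr0 subr_eq0 => /eqP. Qed.

Lemma eq_opp_self (x : C) : x = - x -> x = 0.
Proof.
by move=> h; apply: (@mul_intrC_eq0 2) => //; apply: (eq_via 1 h); ring.
Qed.

(* A 1-cocycle of W with values in /\^2 W maps L_m
   to an element of weight m, so it is encoded by the coefficients
   a m j of L_j (x) L_(m-j) in delta(L_m); [witt_cocycle a] is the cocycle
   identity delta[L_m,L_n] = L_m.delta(L_n) - L_n.delta(L_m) read off on the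
   coefficient of L_j (x) L_(m+n-j). *)
Definition witt_cocycle (a : int -> int -> C) : Prop := forall m n j,
  (m - n)%:~R * a (m + n) j
  = (2 * m - j)%:~R * a n (j - m) + (m - n + j)%:~R * a n j
    - (2 * n - j)%:~R * a m (j - n) - (n - m + j)%:~R * a m j.

Definition witt_antisym (a : int -> int -> C) : Prop :=
  forall m j, a m j = - a m (m - j).

Definition fin_support (f : int -> C) : Prop :=
  exists N : int, forall j, N < `|j| -> f j = 0.

Lemma fin_support_up {f} : fin_support f -> exists N, forall j, N < j -> f j = 0.
Proof. by case=> N hN; exists `|N| => j hj; apply: hN; lia. Qed.

Lemma fin_support_down {f} : fin_support f -> exists N, forall j, j < N -> f j = 0.
Proof. by case=> N hN; exists (- `|N|) => j hj; apply: hN; lia. Qed.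

(* The cocycle identity with the shifted indices given by equations, so that
   instances can be stated in the normal form in which they are used. *)
Lemma witt_cocycle_at {a} (HE : witt_cocycle a) {m n k j x y : int} :
  k = m + n -> x = j - m -> y = j - n ->
  (m - n)%:~R * a k j
  = (2 * m - j)%:~R * a n x + (m - n + j)%:~R * a n j
    - (2 * n - j)%:~R * a m y - (n - m + j)%:~R * a m j.
Proof. by move=> -> -> ->; apply: HE. Qed.

(* A finitely supported sequence obeying a two-term recurrence
   p j * f j = q j * f (j + 1) with p j <> 0 vanishes on the range of the
   recurrence: propagate the zeros at infinity downwards (resp. upwards). *)
Lemma chain_up {f p q : int -> C} {N J : int} :
  (forall j, N < j -> f j = 0) ->
  (forall j, J <= j -> p j * f j = q j * f (j + 1)) ->
  (forall j, J <= j -> p j != 0) -> forall j, J <= j -> f j = 0.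
Proof.
move=> hN hrec hp.
have key : forall k : nat, forall j, J <= j -> N < j + k%:Z -> f j = 0.
  elim=> [|k IH] j hj hk; first by apply: hN; rewrite addr0 in hk.
  have hnext : f (j + 1) = 0 by apply: IH; lia.
  move: (hrec j hj); rewrite hnext mulr0 => /eqP.
  by rewrite mulf_eq0 (negPf (hp j hj)) => /eqP.
by move=> j hj; apply: (key (absz (N - j)).+1 j hj); lia.
Qed.

Lemma chain_down {f p q : int -> C} {N J : int} :
  (forall j, j < N -> f j = 0) ->
  (forall j, j <= J -> p j * f j = q j * f (j - 1)) ->
  (forall j, j <= J -> p j != 0) -> forall j, j <= J -> f j = 0.
Proof.
move=> hN hrec hp.
have key : forall k : nat, forall j, j <= J -> j - k%:Z < N -> f j = 0.
  elim=> [|k IH] j hj hk; first by apply: hN; rewrite subr0 in hk.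
  have hprev : f (j - 1) = 0 by apply: IH; lia.
  move: (hrec j hj); rewrite hprev mulr0 => /eqP.
  by rewrite mulf_eq0 (negPf (hp j hj)) => /eqP.
by move=> j hj; apply: (key (absz (j - N)).+1 j hj); lia.
Qed.

(* The vanishing spreads from L_1 to
   L_(-1), L_2, L_(-2) along two-term recurrences and then to all L_m by
   induction on |m|, using [L_1, L_m] and [L_(-1), L_(-m)]. *)
Section WittRigidity.
Variable b : int -> int -> C.
Hypothesis b_at0 : forall j, b 0 j = 0.
Hypothesis b_anti : witt_antisym b.
Hypothesis b_fin : forall m, fin_support (b m).
Hypothesis b_coc : witt_cocycle b.
Hypothesis b_at1 : forall j, j != 2 -> j != -1 -> b 1 j = 0.

(* [L_1, L_(-1)] = 2 L_0 gives a recurrence for b(-1) on j >= 2. *)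
Lemma vanish_m1_high j : 2 <= j -> b (-1) j = 0.
Proof.
have [N hN] := fin_support_up (b_fin (-1)).
move: j; apply: (chain_up (N := N) (p := fun j => (1 - j)%:~R)
                     (q := fun j => - (3 + j)%:~R)) => //.
- move=> j hj.
  have E := witt_cocycle_at b_coc (m := 1) (n := -1) (k := 0)
              (x := j) (y := j + 2) (j := j + 1)
              erefl ltac:(ring) ltac:(ring).
  rewrite b_at0 !b_at1 in E; try lia.
  by apply: (eq_via (-1) E); ring.
- by move=> j hj; apply: intrC_neq0; lia.
Qed.

Lemma vanish_m1_low j : j <= -3 -> b (-1) j = 0.
Proof. by move=> hj; rewrite b_anti vanish_m1_high ?oppr0 //; lia. Qed.

(* [L_2, L_(-1)] = 3 L_1 gives a recurrence for b 2 on j >= 4, and then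
   the value b(-1) 1. *)
Lemma vanish_2_high j : 4 <= j -> b 2 j = 0.
Proof.
have [N hN] := fin_support_up (b_fin 2).
move: j; apply: (chain_up (N := N) (p := fun j => (3 - j)%:~R)
                     (q := fun j => - (2 + j)%:~R)) => //.
- move=> j hj.
  have E := witt_cocycle_at b_coc (m := 2) (n := -1) (k := 1)
              (x := j - 2) (y := j + 1) (j := j)
              erefl erefl ltac:(ring).
  rewrite b_at1 ?vanish_m1_high in E; try lia.
  by apply: (eq_via (-1) E); ring.
- by move=> j hj; apply: intrC_neq0; lia.
Qed.

Lemma vanish_m1_at1 : b (-1) 1 = 0.
Proof.
have E := witt_cocycle_at b_coc (m := 2) (n := -1) (k := 1)
              (x := 1) (y := 4) (j := 3)
            erefl erefl erefl.
rewrite (b_at1 3) // (vanish_m1_high 3) // (vanish_2_high 4) // in E.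
by apply: (eq_via (-1) E); ring.
Qed.

(* [L_1, L_(-2)] = 3 L_(-1) gives a recurrence for b(-2) on j <= -4, and
   then the remaining value b 1 (-1), so that b 1 vanishes. *)
Lemma vanish_m2_low j : j <= -4 -> b (-2) j = 0.
Proof.
have [N hN] := fin_support_down (b_fin (-2)).
move: j; apply: (chain_down (N := N) (p := fun j => (3 + j)%:~R)
                     (q := fun j => - (2 - j)%:~R)) => //.
- move=> j hj.
  have E := witt_cocycle_at b_coc (m := 1) (n := -2) (k := -1)
              (x := j - 1) (y := j + 2) (j := j)
              erefl erefl ltac:(ring).
  rewrite vanish_m1_low ?b_at1 in E; try lia.
  by apply: (eq_via (-1) E); ring.
- by move=> j hj; apply: intrC_neq0; lia.
Qed.

Lemma vanish_1 j : b 1 j = 0.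
Proof.
have b1m1 : b 1 (-1) = 0.
  have E := witt_cocycle_at b_coc (m := 1) (n := -2) (k := -1)
              (x := -4) (y := -1) (j := -3)
              erefl erefl erefl.
  rewrite vanish_m1_low // vanish_m2_low // (b_at1 (-3)) // in E.
  by apply: (eq_via (-1) E); ring.
case: (eqVneq j 2) => [->|j2]; first by rewrite b_anti b1m1 oppr0.
by case: (eqVneq j (-1)) => [->|jm1] //; apply: b_at1.
Qed.

Lemma vanish_m1 j : b (-1) j = 0.
Proof.
have bm10 : b (-1) 0 = 0.
  have E := witt_cocycle_at b_coc (m := 1) (n := -1) (k := 0)
              (x := 0) (y := 2) (j := 1)
              erefl erefl erefl.
  rewrite b_at0 vanish_m1_at1 !vanish_1 in E.
  by apply: (eq_via (-1) E); ring.
case: (ltrP 1 j) => hj1; first by apply: vanish_m1_high; lia.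
case: (ltrP j (-2)) => hj2; first by apply: vanish_m1_low; lia.
have : j = 1 \/ j = 0 \/ j = -1 \/ j = -2 by lia.
case=> [|[|[|]]] ->; rewrite ?vanish_m1_at1 ?bm10 //.
- by rewrite b_anti (_ : -1 - -1 = 0) // bm10 oppr0.
- by rewrite b_anti (_ : -1 - -2 = 1) // vanish_m1_at1 oppr0.
Qed.

(* With b 1 = b(-1) = 0 the bracket [L_2, L_(-1)] (resp. [L_1, L_(-2)])
   gives a recurrence starting from the antisymmetric middle value. *)
Lemma vanish_2 j : b 2 j = 0.
Proof.
have rec i : (2 + i)%:~R * b 2 (i + 1) + (3 - i)%:~R * b 2 i = 0.
  have E := witt_cocycle_at b_coc (m := 2) (n := -1) (k := 1)
              (x := i - 2) (y := i + 1) (j := i)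
              erefl erefl ltac:(ring).
  rewrite !vanish_1 !vanish_m1 in E.
  by apply: (eq_via (-1) E); ring.
have e1 : b 2 1 = 0 by apply: eq_opp_self; rewrite {1}b_anti.
have e2 : b 2 2 = 0.
  by apply: (@mul_intrC_eq0 3) => //; have := rec 1; rewrite e1 mulr0 addr0.
have e3 : b 2 3 = 0.
  by apply: (@mul_intrC_eq0 4) => //; have := rec 2; rewrite e2 mulr0 addr0.
have pos i : 1 <= i -> b 2 i = 0.
  move=> hi; case: (ltrP 3 i) => h3; first by apply: vanish_2_high; lia.
  have : i = 1 \/ i = 2 \/ i = 3 by lia.
  by case=> [|[|]] ->.
case: (lerP 1 j) => hj; first exact: pos.
by rewrite b_anti pos ?oppr0 //; lia.
Qed.

Lemma vanish_m2 j : b (-2) j = 0.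
Proof.
have rec i : (2 - i)%:~R * b (-2) (i - 1) + (3 + i)%:~R * b (-2) i = 0.
  have E := witt_cocycle_at b_coc (m := 1) (n := -2) (k := -1)
              (x := i - 1) (y := i + 2) (j := i)
              erefl erefl ltac:(ring).
  rewrite !vanish_1 !vanish_m1 in E.
  by apply: (eq_via (-1) E); ring.
have e1 : b (-2) (-1) = 0 by apply: eq_opp_self; rewrite {1}b_anti.
have e2 : b (-2) (-2) = 0.
  by apply: (@mul_intrC_eq0 3) => //; have := rec (-1); rewrite e1 mulr0 addr0.
have e3 : b (-2) (-3) = 0.
  by apply: (@mul_intrC_eq0 4) => //; have := rec (-2); rewrite e2 mulr0 addr0.
have neg i : i <= -1 -> b (-2) i = 0.
  move=> hi; case: (ltrP i (-3)) => h3; first by apply: vanish_m2_low; lia.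
  have : i = -1 \/ i = -2 \/ i = -3 by lia.
  by case=> [|[|]] ->.
case: (lerP j (-1)) => hj; first exact: neg.
by rewrite b_anti neg ?oppr0 //; lia.
Qed.

(* [L_1, L_m] = (1 - m) L_(m+1) and [L_(-1), L_(-m)] = (m - 1) L_(-m-1)
   propagate the vanishing to all |m| >= 2. *)
Lemma witt_rigidity m j : b m j = 0.
Proof.
have up (k : nat) i : b (k%:Z + 2) i = 0.
  elim: k i => [|k IH] i; first by rewrite add0r vanish_2.
  have E := witt_cocycle_at b_coc (m := 1) (n := k%:Z + 2) (k := k.+1%:Z + 2)
              (x := i - 1)
              (y := i - (k%:Z + 2)) (j := i) ltac:(lia) erefl erefl.
  rewrite !IH !vanish_1 in E.
  apply: (@mul_intrC_eq0 (1 - (k%:Z + 2))); first lia.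
  by apply: (eq_via 1 E); ring.
have down (k : nat) i : b (- (k%:Z + 2)) i = 0.
  elim: k i => [|k IH] i; first by rewrite add0r vanish_m2.
  have E := witt_cocycle_at b_coc (m := -1) (n := - (k%:Z + 2)) (k := - (k.+1%:Z + 2))
              (x := i + 1) (y := i + (k%:Z + 2)) (j := i)
              ltac:(lia) ltac:(ring) ltac:(ring).
  rewrite !IH !vanish_m1 in E.
  apply: (@mul_intrC_eq0 (-1 + (k%:Z + 2))); first lia.
  by apply: (eq_via 1 E); ring.
case: (lerP 2 m) => hm.
  by rewrite (_ : m = (absz (m - 2))%:Z + 2) ?up //; lia.
case: (lerP m (-2)) => hm2.
  by rewrite (_ : m = - ((absz (- m - 2))%:Z + 2)) ?down //; lia.
have : m = 1 \/ m = 0 \/ m = -1 by lia.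
by case=> [|[|]] ->; [apply: vanish_1 | apply: b_at0 | apply: vanish_m1].
Qed.

End WittRigidity.

(* Coefficients of the coboundary L_m |-> L_m . r of the weight-zero element
   r = sum_i r i L_i (x) L_(-i) of W (x) W. *)
Definition witt_cob (r : int -> C) (m j : int) : C :=
  (2 * m - j)%:~R * r (j - m) + (m + j)%:~R * r j.

Lemma witt_cocycle_cob r : witt_cocycle (witt_cob r).
Proof.
move=> m n j; rewrite /witt_cob.
have -> : j - (m + n) = j - m - n by ring.
have -> : j - n - m = j - m - n by ring.
ring.
Qed.

Lemma witt_cocycle_sub a b :
  witt_cocycle a -> witt_cocycle b -> witt_cocycle (fun m j => a m j - b m j).
Proof. by move=> ha hb m n j; rewrite /= mulrBr ha hb; ring. Qed.

Lemma witt_antisym_cob {r} :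
  (forall i, r (- i) = - r i) -> witt_antisym (witt_cob r).
Proof.
move=> hr m j; rewrite /witt_cob.
have -> : m - j - m = - j by ring.
have -> : m - j = - (j - m) by ring.
by rewrite !hr; ring.
Qed.

Lemma fin_support_cob {r} m : fin_support r -> fin_support (witt_cob r m).
Proof.
by case=> N hN; exists (`|N| + `|m|) => j hj; rewrite /witt_cob !hN ?mulr0 ?addr0 //; lia.
Qed.

(* Given the (finitely supported) coefficients a1 j of delta(L_1), an odd
   r with witt_cob r 1 j = a1 j for j = 1 and j >= 3: the recurrence
   (1 + j) r j = a1 j + (j - 2) r (j - 1) is solved downwards from the top of
   the support, which yields a closed formula as a finite tail sum. *)
Section WittPotential.
Variables (a1 : int -> C) (N : int).
Hypothesis a1_fin : forall j, N < `|j| -> a1 j = 0.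

Definition pot_term (k : int) : C := (k * (k - 1))%:~R * a1 k.

Definition pot_tail (j : int) : C :=
  \sum_(t < (absz N).+1) pot_term (j + 1 + t%:Z).

Definition pot_pos (j : int) : C :=
  if 2 <= j then - pot_tail j / ((j - 1) * j * (j + 1))%:~R
  else if j == 1 then a1 1 / 2%:~R else 0.

Definition witt_potential (j : int) : C :=
  if 0 <= j then pot_pos j else - pot_pos (- j).

Lemma pot_tail_high j : (absz N)%:Z <= j -> pot_tail j = 0.
Proof.
move=> hj; rewrite /pot_tail big1 // => t _.
by rewrite /pot_term a1_fin ?mulr0 //; lia.
Qed.

Lemma pot_tail_rec j : 0 <= j -> pot_tail (j - 1) = pot_term j + pot_tail j.
Proof.
move=> hj; rewrite /pot_tail big_ord_recl big_ord_recr /=.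
have -> : pot_term (j + 1 + (absz N)%:Z) = 0.
  by rewrite /pot_term a1_fin ?mulr0 //; lia.
congr (_ + _); first by congr pot_term; rewrite /=; ring.
by rewrite addr0; apply: eq_bigr => t _; congr pot_term; rewrite /bump /=; lia.
Qed.

Lemma witt_potential_odd i : witt_potential (- i) = - witt_potential i.
Proof.
rewrite /witt_potential; case: (lerP 0 i) => hi.
  case: (lerP 0 (- i)) => hi2; last by rewrite opprK.
  have -> : i = 0 by lia.
  by rewrite oppr0 /pot_pos /= oppr0.
by case: (lerP 0 (- i)) => hi2; [rewrite opprK | lia].
Qed.

Lemma witt_potential_fin : fin_support witt_potential.
Proof.
exists ((absz N)%:Z + 1) => j hj; rewrite /witt_potential /pot_pos.
case: (lerP 0 j) => hj0; rewrite ifT; try lia.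
  by rewrite pot_tail_high ?oppr0 ?mul0r //; lia.
by rewrite pot_tail_high ?oppr0 ?mul0r ?oppr0 //; lia.
Qed.

Lemma witt_potential_at1 : a1 1 = witt_cob witt_potential 1 1.
Proof. by rewrite /witt_cob /witt_potential /= /pot_pos /=; field. Qed.

Lemma witt_potential_high j : 3 <= j -> a1 j = witt_cob witt_potential 1 j.
Proof.
move=> hj; rewrite /witt_cob /witt_potential !ifT; try lia.
rewrite /pot_pos !ifT; try lia.
rewrite pot_tail_rec /pot_term; last by lia.
field.
have e1 : j%:~R + 1 = (j + 1)%:~R :> C by ring.
have e2 : j%:~R - 1 = (j - 1)%:~R :> C by ring.
have e3 : j%:~R - 1 - 1 = (j - 2)%:~R :> C by ring.
by rewrite e3 e1 e2 !intrC_neq0 //; lia.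
Qed.

End WittPotential.

Arguments witt_potential_fin {a1 N}.
Arguments witt_potential_high {a1 N}.

(* Subtracting the coboundary of [witt_potential]
   leaves a cocycle covered by [witt_rigidity]. *)
Lemma witt_H1 (a : int -> int -> C) :
  (forall j, a 0 j = 0) -> witt_antisym a ->
  (forall m, fin_support (a m)) -> witt_cocycle a ->
  exists r : int -> C, [/\ forall i, r (- i) = - r i, fin_support r &
                           forall m j, a m j = witt_cob r m j].
Proof.
move=> a_at0 a_anti a_fin a_coc.
have [N hN] := a_fin 1.
pose r := witt_potential (a 1) N.
have r_odd : forall i, r (- i) = - r i by apply: witt_potential_odd.
have r_fin : fin_support r by apply: witt_potential_fin hN.
exists r; split=> //.
pose b m j := a m j - witt_cob r m j.
have b_anti : witt_antisym b.
  by move=> m j; rewrite /b a_anti (witt_antisym_cob r_odd m j); ring.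
have b_at1 : forall j, j = 1 \/ 3 <= j -> b 1 j = 0.
  move=> j [->|hj]; rewrite /b; first by rewrite (witt_potential_at1 (a 1) N) subrr.
  by rewrite (witt_potential_high hN _ hj) subrr.
suff b0 : forall m j, b m j = 0.
  by move=> m j; apply/eqP; rewrite -subr_eq0; apply/eqP; exact: b0.
apply: witt_rigidity => //.
- by move=> j; rewrite /b a_at0 /witt_cob subr0; ring.
- move=> m; have [N1 h1] := a_fin m; have [N2 h2] := fin_support_cob m r_fin.
  by exists (`|N1| + `|N2|) => j hj; rewrite /b h1 ?h2 ?subr0 //; lia.
- exact: witt_cocycle_sub (witt_cocycle_cob r).
- move=> j j2 jm1.
  case: (lerP 3 j) => h3; first by apply: b_at1; right.
  case: (eqVneq j 1) => [->|j1]; first by apply: b_at1; left.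
  by rewrite b_anti b_at1 ?oppr0 //; lia.
Qed.

(* An element t of g (x) g is recorded by its
   coefficient array t p q (coefficient of e_p (x) e_q); [basis_act k t] is
   the coefficient array of e_k . t, using [e_k, e_p] = (2k - p) e_(p+k)
   read backwards when p and k lie in the same copy. *)
Definition bicoef : Type := WWidx -> WWidx -> C.

Definition basis_act (k : WWidx) (t : bicoef) (p q : WWidx) : C :=
  (if p.1 == k.1 then (2 * k.2 - p.2)%:~R * t (p.1, p.2 - k.2) q else 0) +
  (if q.1 == k.1 then (2 * k.2 - q.2)%:~R * t p (q.1, q.2 - k.2) else 0).

(* The cocycle identity delta[e_k, e_l] = e_k.delta(e_l) - e_l.delta(e_k)
   for the coefficient arrays d k of delta(e_k). *)
Definition cocycle_coef (d : WWidx -> bicoef) : Prop := forall k l p q,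
  (if k.1 == l.1 then (k.2 - l.2)%:~R * d (k.1, k.2 + l.2) p q else 0)
  = basis_act k (d l) p q - basis_act l (d k) p q.

Definition antisym (t : bicoef) : Prop := forall p q, t p q = - t q p.

Definition fin_bisupport (t : bicoef) : Prop :=
  exists N : int, forall p q : WWidx,
    N < `|(p.2 : int)| \/ N < `|(q.2 : int)| -> t p q = 0.

Lemma basis_act_sub k t s p q :
  basis_act k (fun p q => t p q - s p q) p q = basis_act k t p q - basis_act k s p q.
Proof. by rewrite /basis_act; case: ifP => _; case: ifP => _; ring. Qed.

Lemma basis_act_add k t s p q :
  basis_act k (fun p q => t p q + s p q) p q = basis_act k t p q + basis_act k s p q.
Proof. by rewrite /basis_act; case: ifP => _; case: ifP => _; ring. Qed.

Lemma basis_act_ext k (t s : bicoef) p q :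
  (forall p q, t p q = s p q) -> basis_act k t p q = basis_act k s p q.
Proof. by move=> h; rewrite /basis_act !h. Qed.

Lemma cocycle_coef_cob r : cocycle_coef (fun k => basis_act k r).
Proof.
move=> [kb km] [lb lm] [pb pi] [qb qi]; rewrite /basis_act /=.
have -> : pi - km - lm = pi - (km + lm) by ring.
have -> : pi - lm - km = pi - (km + lm) by ring.
have -> : qi - km - lm = qi - (km + lm) by ring.
have -> : qi - lm - km = qi - (km + lm) by ring.
by case: kb; case: lb; case: pb; case: qb => /=; ring.
Qed.

Lemma cocycle_coef_sub {d d'} : cocycle_coef d -> cocycle_coef d' ->
  cocycle_coef (fun k p q => d k p q - d' k p q).
Proof.
move=> hd hd' k l p q; rewrite !basis_act_sub.
have := hd k l p q; have := hd' k l p q.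
case: ifP => _ h' h; first by rewrite mulrBr h h'; ring.
by rewrite -[0](subr0 0) {1}h {1}h'; ring.
Qed.

Lemma antisym_sub {t s} : antisym t -> antisym s -> antisym (fun p q => t p q - s p q).
Proof. by move=> ht hs p q; rewrite ht hs; ring. Qed.

Lemma antisym_add {t s} : antisym t -> antisym s -> antisym (fun p q => t p q + s p q).
Proof. by move=> ht hs p q; rewrite ht hs; ring. Qed.

Lemma fin_bisupport_sub {t s} :
  fin_bisupport t -> fin_bisupport s -> fin_bisupport (fun p q => t p q - s p q).
Proof.
case=> N1 h1 [N2 h2]; exists (`|N1| + `|N2|) => p q hpq.
by rewrite h1 ?h2 ?subr0 //; lia.
Qed.

Lemma fin_bisupport_add {t s} :
  fin_bisupport t -> fin_bisupport s -> fin_bisupport (fun p q => t p q + s p q).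
Proof.
case=> N1 h1 [N2 h2]; exists (`|N1| + `|N2|) => p q hpq.
by rewrite h1 ?h2 ?addr0 //; lia.
Qed.

Lemma antisym_basis_act k {r} : antisym r -> antisym (basis_act k r).
Proof.
move=> hr p q; rewrite /basis_act (hr (q.1, q.2 - k.2) p) (hr q (p.1, p.2 - k.2)).
by case: ifP => _; case: ifP => _; ring.
Qed.

Lemma fin_bisupport_basis_act k {r} : fin_bisupport r -> fin_bisupport (basis_act k r).
Proof.
case=> N hN; exists (`|N| + `|k.2|) => p q hpq; rewrite /basis_act.
rewrite (hN (p.1, p.2 - k.2) q); last by case: hpq => h; [left|right] => /=; lia.
rewrite (hN p (q.1, q.2 - k.2)); last by case: hpq => h; [left|right] => /=; lia.
by rewrite !mulr0 !if_same addr0.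
Qed.

(* The representation on finitely supported arrays is faithful: act with a
   basis element e_(b,m) of huge index, which shifts the first factor
   outside the support. *)
Lemma basis_act_faithful t : fin_bisupport t ->
  (forall k p q, basis_act k t p q = 0) -> forall p q, t p q = 0.
Proof.
case=> N hN H [pb pi] q.
pose m := `|N| + `|pi| + 1.
have := H (pb, m) (pb, pi + m) q; rewrite /basis_act /= eqxx.
rewrite (_ : pi + m - m = pi); last by ring.
rewrite (hN (pb, pi + m)); last by left; rewrite /m /=; lia.
rewrite mulr0 if_same addr0; apply: mul_intrC_eq0; rewrite /m; lia.
Qed.

Definition weight1 (p q : WWidx) : int :=
  (if p.1 then 0 else p.2) + (if q.1 then 0 else q.2).
Definition weight2 (p q : WWidx) : int :=
  (if p.1 then p.2 else 0) + (if q.1 then q.2 else 0).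
Definition kweight1 (k : WWidx) : int := if k.1 then 0 else k.2.
Definition kweight2 (k : WWidx) : int := if k.1 then k.2 else 0.

Definition L0 : WWidx := (false, 0).
Definition Lb0 : WWidx := (true, 0).

Lemma weight1C p q : weight1 p q = weight1 q p.
Proof. by rewrite /weight1 addrC. Qed.

Lemma weight2C p q : weight2 p q = weight2 q p.
Proof. by rewrite /weight2 addrC. Qed.

Lemma basis_act_L0 t p q : basis_act L0 t p q = - (weight1 p q)%:~R * t p q.
Proof.
case: p q => [pb pi] [qb qi]; rewrite /basis_act /weight1 /= !subr0.
by case: pb; case: qb => /=; ring.
Qed.

Lemma basis_act_Lb0 t p q : basis_act Lb0 t p q = - (weight2 p q)%:~R * t p q.
Proof.
case: p q => [pb pi] [qb qi]; rewrite /basis_act /weight2 /= !subr0.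
by case: pb; case: qb => /=; ring.
Qed.

(* The cocycle identity for the pair (L_0, e_k) (resp. (\bar L_0, e_k)):
   d k has weight k up to the failure of d L0 (resp. d Lb0) to vanish. *)
Lemma weight_relation d k p q : cocycle_coef d ->
  (weight1 p q - kweight1 k)%:~R * d k p q = - basis_act k (d L0) p q /\
  (weight2 p q - kweight2 k)%:~R * d k p q = - basis_act k (d Lb0) p q.
Proof.
move=> hd; have h1 := hd L0 k p q; have h2 := hd Lb0 k p q.
rewrite basis_act_L0 in h1; rewrite basis_act_Lb0 in h2.
case: k h1 h2 => [[] km]; rewrite /L0 /Lb0 /kweight1 /kweight2 /= !add0r => h1 h2.
- by split; [apply: (eq_via 1 h1) | apply: (eq_via 1 h2)]; ring.
- by split; [apply: (eq_via 1 h1) | apply: (eq_via 1 h2)]; ring.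
Qed.

Lemma weight_support d : cocycle_coef d ->
  (forall p q, d L0 p q = 0) -> (forall p q, d Lb0 p q = 0) ->
  forall k p q, (weight1 p q != kweight1 k) || (weight2 p q != kweight2 k) ->
  d k p q = 0.
Proof.
move=> hd z0 zb0 k p q /orP[h|h]; have [h1 h2] := weight_relation d k p q hd.
  rewrite /basis_act !z0 !mulr0 !if_same addr0 oppr0 in h1.
  by apply: (@mul_intrC_eq0 (weight1 p q - kweight1 k)); rewrite ?subr_eq0.
rewrite /basis_act !zb0 !mulr0 !if_same addr0 oppr0 in h2.
by apply: (@mul_intrC_eq0 (weight2 p q - kweight2 k)); rewrite ?subr_eq0.
Qed.

Lemma weight_shift_l k p q : p.1 = k.1 ->
  weight1 (p.1, p.2 - k.2) q = weight1 p q - kweight1 k /\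
  weight2 (p.1, p.2 - k.2) q = weight2 p q - kweight2 k.
Proof.
case: p k => [pb pi] [kb km] /= ->; rewrite /weight1 /weight2 /kweight1 /kweight2 /=.
by case: kb; split; ring.
Qed.

Lemma weight_shift_r k p q : q.1 = k.1 ->
  weight1 p (q.1, q.2 - k.2) = weight1 p q - kweight1 k /\
  weight2 p (q.1, q.2 - k.2) = weight2 p q - kweight2 k.
Proof.
case: q k => [qb qi] [kb km] /= ->; rewrite /weight1 /weight2 /kweight1 /kweight2 /=.
by case: kb; split; ring.
Qed.

Definition weight_zero (t : bicoef) : Prop :=
  forall p q, (weight1 p q != 0) || (weight2 p q != 0) -> t p q = 0.

Lemma basis_act_weight_zero k t p q : weight_zero t ->
  (weight1 p q != kweight1 k) || (weight2 p q != kweight2 k) -> basis_act k t p q = 0.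
Proof.
move=> ht hw; rewrite /basis_act.
have hw' : (weight1 p q - kweight1 k != 0) || (weight2 p q - kweight2 k != 0).
  by rewrite !subr_eq0.
have shl : p.1 = k.1 -> t (p.1, p.2 - k.2) q = 0.
  by move=> e; apply: ht; have [-> ->] := weight_shift_l k p q e.
have shr : q.1 = k.1 -> t p (q.1, q.2 - k.2) = 0.
  by move=> e; apply: ht; have [-> ->] := weight_shift_r k p q e.
by case: eqP => [/shl -> |_]; case: eqP => [/shr -> |_]; rewrite ?mulr0 ?addr0.
Qed.

(* A cocycle whose values on L_0 and \bar L_0 have weight (0, 0) vanishes
   there: by [weight_relation] e_k.(d L0) vanishes in weight k, and by
   [basis_act_weight_zero] also outside it; conclude by faithfulness. *)
Lemma cocycle_weight_zero d : cocycle_coef d ->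
  fin_bisupport (d L0) -> fin_bisupport (d Lb0) ->
  weight_zero (d L0) -> weight_zero (d Lb0) ->
  (forall p q, d L0 p q = 0) /\ (forall p q, d Lb0 p q = 0).
Proof.
move=> hd f0 fb0 s0 sb0; split; apply: basis_act_faithful => // k p q.
- case hw : ((weight1 p q != kweight1 k) || (weight2 p q != kweight2 k)).
    exact: basis_act_weight_zero.
  move/negbT: hw; rewrite negb_or !negbK => /andP[/eqP e1 _].
  have [h1 _] := weight_relation d k p q hd.
  by apply/eqP; rewrite -oppr_eq0 -h1 e1 subrr mul0r.
- case hw : ((weight1 p q != kweight1 k) || (weight2 p q != kweight2 k)).
    exact: basis_act_weight_zero.
  move/negbT: hw; rewrite negb_or !negbK => /andP[_ /eqP e2].
  have [_ h2] := weight_relation d k p q hd.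
  by apply/eqP; rewrite -oppr_eq0 -h2 e2 subrr mul0r.
Qed.

(* Step 1.  Since L_0 acts on e_p (x) e_q by -weight1 p q, the component of
   d L0 of nonzero weight1 is a coboundary; similarly for \bar L_0.  The
   array [weight_potential d] removes both at once (they agree, by the
   cocycle identity for [L_0, \bar L_0] = 0). *)
Definition weight_potential (d : WWidx -> bicoef) (p q : WWidx) : C :=
  if weight1 p q != 0 then - d L0 p q / (weight1 p q)%:~R
  else if weight2 p q != 0 then - d Lb0 p q / (weight2 p q)%:~R else 0.

Definition sub_cob (d : WWidx -> bicoef) (r : bicoef) (k : WWidx) : bicoef :=
  fun p q => d k p q - basis_act k r p q.

Lemma weight_potential_antisym {d} :
  antisym (d L0) -> antisym (d Lb0) -> antisym (weight_potential d).
Proof.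
move=> a0 ab0 p q.
rewrite /weight_potential (weight1C q p) (weight2C q p) (a0 q p) (ab0 q p).
by case: ifP => _; [|case: ifP => _]; ring.
Qed.

Lemma weight_potential_fin {d} :
  fin_bisupport (d L0) -> fin_bisupport (d Lb0) -> fin_bisupport (weight_potential d).
Proof.
move=> [N1 h1] [N2 h2]; exists (`|N1| + `|N2|) => p q hpq.
rewrite /weight_potential h1 ?h2 ?oppr0 ?mul0r ?if_same //.
  by case: hpq => h; [left|right]; lia.
by case: hpq => h; [left|right]; lia.
Qed.

Lemma weight_potential_weight_zero {d} : cocycle_coef d ->
  weight_zero (sub_cob d (weight_potential d) L0) /\
  weight_zero (sub_cob d (weight_potential d) Lb0).
Proof.
move=> hd.
have rel p q : (weight1 p q)%:~R * d Lb0 p q = (weight2 p q)%:~R * d L0 p q.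
  have := hd L0 Lb0 p q; rewrite basis_act_L0 basis_act_Lb0 /= => h.
  by apply: (eq_via 1 h); ring.
split=> p q hw; rewrite /sub_cob ?basis_act_L0 ?basis_act_Lb0 /weight_potential.
- case: ifP => h1; first by field; exact: intrC_neq0.
  move: h1 hw => /negbFE h1; rewrite h1 /= => h2.
  rewrite (eqP h1) mulr0z oppr0 mul0r subr0.
  have := rel p q; rewrite (eqP h1) mulr0z mul0r => /esym /eqP.
  by rewrite mulf_eq0 intr_eq0 (negPf h2) => /eqP.
- case: ifP => h1.
    apply: (@mul_intrC_eq0 (weight1 p q)) => //.
    transitivity ((weight1 p q)%:~R * d Lb0 p q - (weight2 p q)%:~R * d L0 p q).
      by field; exact: intrC_neq0.
    by rewrite rel subrr.
  move: h1 hw => /negbFE h1; rewrite h1 /= => h2; rewrite h2.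
  by field; exact: intrC_neq0.
Qed.

Lemma kill_weight_zero {d} : cocycle_coef d -> (forall k, fin_bisupport (d k)) ->
  let d' := sub_cob d (weight_potential d) in
  (forall p q, d' L0 p q = 0) /\ (forall p q, d' Lb0 p q = 0).
Proof.
move=> hd hF d'.
have hr := weight_potential_fin (hF L0) (hF Lb0).
have [s0 sb0] := weight_potential_weight_zero hd.
apply: cocycle_weight_zero => //.
- exact: cocycle_coef_sub (cocycle_coef_cob _).
- exact: fin_bisupport_sub (fin_bisupport_basis_act _ hr).
- exact: fin_bisupport_sub (fin_bisupport_basis_act _ hr).
Qed.

(* The only
   weight-zero mixed tensor is L_0 /\ \bar L_0, and its coboundary absorbs
   all mixed components of a cocycle vanishing on L_0 and \bar L_0. *)
Definition cross_tensor (c : C) (p q : WWidx) : C :=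
  if (p == L0) && (q == Lb0) then c
  else if (p == Lb0) && (q == L0) then - c else 0.

Lemma cross_tensor_weight c p q :
  cross_tensor c p q != 0 -> weight1 p q = 0 /\ weight2 p q = 0.
Proof.
rewrite /cross_tensor.
case: (boolP ((p == L0) && (q == Lb0))) => [/andP[/eqP -> /eqP ->] //| _].
case: (boolP ((p == Lb0) && (q == L0))) => [/andP[/eqP -> /eqP ->] //| _].
by rewrite eqxx.
Qed.

Lemma cross_tensor_antisym c : antisym (cross_tensor c).
Proof.
move=> p q; rewrite /cross_tensor.
by case: eqP => [->|hp]; case: eqP => [->|hq] //=; rewrite ?eqxx /= ?oppr0 ?opprK //;
   try (case: eqP => //; case: eqP => //= *; by rewrite ?oppr0 ?opprK).
Qed.

Lemma cross_tensor_fin c : fin_bisupport (cross_tensor c).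
Proof.
exists 0 => p q hpq; rewrite /cross_tensor.
case: hpq => h.
  have n1 : (p == L0) = false by apply/negbTE/eqP => e; rewrite e in h.
  have n2 : (p == Lb0) = false by apply/negbTE/eqP => e; rewrite e in h.
  by rewrite n1 n2.
have n1 : (q == L0) = false by apply/negbTE/eqP => e; rewrite e in h.
have n2 : (q == Lb0) = false by apply/negbTE/eqP => e; rewrite e in h.
by rewrite n1 n2 !andbF.
Qed.

Lemma cross_tensor_L0 c p q : basis_act L0 (cross_tensor c) p q = 0.
Proof.
rewrite basis_act_L0.
by case: (eqVneq (cross_tensor c p q) 0) => [->|/cross_tensor_weight [-> _]]; ring.
Qed.

Lemma cross_tensor_Lb0 c p q : basis_act Lb0 (cross_tensor c) p q = 0.
Proof.
rewrite basis_act_Lb0.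
by case: (eqVneq (cross_tensor c p q) 0) => [->|/cross_tensor_weight [_ ->]]; ring.
Qed.

(* The cocycle identity for [L_m, \bar L_n] = 0, read on L_m (x) \bar L_n,
   ties the mixed components of d(L_m) and d(\bar L_n) together. *)
Lemma cross_relation d m n : cocycle_coef d ->
  m%:~R * d (true, n) L0 (true, n) = n%:~R * d (false, m) (false, m) Lb0.
Proof.
move=> hd; have := hd (false, m) (true, n) (false, m) (true, n).
rewrite /basis_act /= !subrr => h.
have em : 2 * m - m = m by ring.
have en : 2 * n - n = n by ring.
by rewrite em en in h; apply: (eq_via (-1) h); ring.
Qed.

Lemma mixed_vanish d : (forall k, antisym (d k)) ->
  (forall k p q, (weight1 p q != kweight1 k) || (weight2 p q != kweight2 k) ->
     d k p q = 0) ->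
  (forall m, d (false, m) (false, m) Lb0 = 0) ->
  (forall n, d (true, n) L0 (true, n) = 0) ->
  forall k p q, p.1 != q.1 -> d k p q = 0.
Proof.
move=> hA hW h1 h2 [kb km] [b i] [b' j] /= hb.
have {hb} -> : b' = ~~ b by move: hb; case: b; case: b'.
case hw : ((weight1 (b, i) (~~ b, j) != kweight1 (kb, km)) ||
           (weight2 (b, i) (~~ b, j) != kweight2 (kb, km))); first exact: hW.
move/negbT: hw; rewrite negb_or !negbK /weight1 /weight2 /kweight1 /kweight2 /=.
case: b; case: kb => /=; rewrite ?add0r ?addr0 => /andP[/eqP e1 /eqP e2]; subst.
- by rewrite hA h2 oppr0.
- by rewrite hA h1 oppr0.
- exact: h2.
- exact: h1.
Qed.

Lemma kill_cross {d} : cocycle_coef d -> (forall k, antisym (d k)) ->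
  (forall p q, d L0 p q = 0) -> (forall p q, d Lb0 p q = 0) ->
  exists c, let d' := sub_cob d (cross_tensor c) in
  [/\ forall p q, d' L0 p q = 0, forall p q, d' Lb0 p q = 0 &
      forall k p q, p.1 != q.1 -> d' k p q = 0].
Proof.
move=> hd hA z0 zb0.
set c := d (false, 1) (false, 1) Lb0; exists c => d'.
have e0 p q : d' L0 p q = 0 by rewrite /d' /sub_cob z0 cross_tensor_L0 subrr.
have eb0 p q : d' Lb0 p q = 0 by rewrite /d' /sub_cob zb0 cross_tensor_Lb0 subrr.
split=> //.
have hd' : cocycle_coef d' by exact: cocycle_coef_sub (cocycle_coef_cob _).
have cross0 : cross_tensor c L0 Lb0 = c by rewrite /cross_tensor !eqxx.
have eps1 : d (true, 1) L0 (true, 1) = c.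
  by have := cross_relation d 1 1 hd; rewrite !mul1r.
apply: mixed_vanish.
- move=> k; apply: antisym_sub => //.
  exact: antisym_basis_act (cross_tensor_antisym c).
- exact: weight_support.
- move=> m; rewrite /d' /sub_cob /basis_act /= subrr cross0.
  have := cross_relation d m 1 hd; rewrite eps1 mul1r => <-.
  have -> : 2 * m - m = m by ring.
  by ring.
- move=> n; rewrite /d' /sub_cob /basis_act /= subrr cross0.
  have := cross_relation d 1 n hd; rewrite mul1r => ->.
  have -> : 2 * n - n = n by ring.
  by rewrite /c; ring.
Qed.

Lemma same_copy_support d : cocycle_coef d ->
  (forall p q, d L0 p q = 0) -> (forall p q, d Lb0 p q = 0) ->
  (forall k p q, p.1 != q.1 -> d k p q = 0) ->
  forall k p q, ~~ [&& p.1 == k.1, q.1 == k.1 & p.2 + q.2 == k.2] -> d k p q = 0.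
Proof.
move=> hd z0 zb0 mix [kb km] [pb pi] [qb qj] /= h.
case: (eqVneq pb qb) => [e|ne]; last exact: mix.
subst qb.
case hw : ((weight1 (pb, pi) (pb, qj) != kweight1 (kb, km)) ||
           (weight2 (pb, pi) (pb, qj) != kweight2 (kb, km))).
  exact: weight_support.
move/negbT: hw; rewrite negb_or !negbK /weight1 /weight2 /kweight1 /kweight2 /=.
case: pb h; case: kb => /= h; rewrite ?add0r ?addr0.
- by move=> /eqP e; rewrite e eqxx in h.
- by move=> /andP[/eqP <- _]; apply: z0.
- by move=> /andP[_ /eqP <-]; apply: zb0.
- by move=> /andP[/eqP e _]; rewrite e eqxx in h.
Qed.

Definition copy_coef (d : WWidx -> bicoef) (b : bool) (m j : int) : C :=
  d (b, m) (b, j) (b, m - j).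

Lemma copy_coef_cocycle d b : cocycle_coef d -> witt_cocycle (copy_coef d b).
Proof.
move=> hd m n j; rewrite /copy_coef.
have := hd (b, m) (b, n) (b, j) (b, m + n - j); rewrite /basis_act /= !eqxx => h.
have e1 : m + n - j - m = n - j by ring.
have e2 : m + n - j - n = m - j by ring.
have e3 : m + n - j = n - (j - m) by ring.
have e4 : m + n - j = m - (j - n) by ring.
rewrite e1 e2 in h; rewrite -e3 -e4.
by apply: (eq_via 1 h); ring.
Qed.

Definition diag_tensor (rho : bool -> int -> C) (p q : WWidx) : C :=
  if (p.1 == q.1) && (p.2 + q.2 == 0) then rho p.1 p.2 else 0.

Lemma diag_tensor_antisym rho :
  (forall b i, rho b (- i) = - rho b i) -> antisym (diag_tensor rho).
Proof.
move=> hrho [pb pi] [qb qj]; rewrite /diag_tensor /=.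
case: (eqVneq pb qb) => [<-|ne]; last by rewrite /= oppr0.
rewrite /= addrC; case: eqP => h; last by rewrite oppr0.
have -> : pi = - qj by lia.
by rewrite hrho.
Qed.

Lemma diag_tensor_fin rho : (forall b, fin_support (rho b)) ->
  fin_bisupport (diag_tensor rho).
Proof.
move=> hrho; have [N1 h1] := hrho false; have [N2 h2] := hrho true.
exists (`|N1| + `|N2|) => [[pb pi] [qb qj]] /= hpq; rewrite /diag_tensor /=.
case: andP => // [[_ /eqP e]].
have hpi : `|N1| + `|N2| < `|pi| by case: hpq => h; lia.
by case: pb; [apply: h2 | apply: h1]; lia.
Qed.

Lemma basis_act_diag_tensor rho k p q :
  basis_act k (diag_tensor rho) p q =
  if [&& p.1 == k.1, q.1 == k.1 & p.2 + q.2 == k.2]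
  then witt_cob (rho k.1) k.2 p.2 else 0.
Proof.
case: k p q => [kb km] [pb pi] [qb qj]; rewrite /basis_act /diag_tensor /witt_cob /=.
case: (boolP [&& pb == kb, qb == kb & pi + qj == km]) => [|hc].
  move=> /and3P[/eqP -> /eqP -> /eqP <-]; rewrite !eqxx /=.
  rewrite (_ : pi - (pi + qj) + qj = 0); last by ring.
  rewrite (_ : pi + (qj - (pi + qj)) = 0); last by ring.
  rewrite (_ : pi - (pi + qj) = - qj); last by ring.
  by rewrite eqxx /=; ring.
have c1 : pb == kb -> ((pb == qb) && (pi - km + qj == 0)) = false.
  move=> /eqP e1; apply/negbTE/negP => /andP[/eqP e2 /eqP e3].
  by move: hc; rewrite -e2 e1 !eqxx /=; apply/negP; rewrite negbK; apply/eqP; lia.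
have c2 : qb == kb -> ((pb == qb) && (pi + (qj - km) == 0)) = false.
  move=> /eqP e1; apply/negbTE/negP => /andP[/eqP e2 /eqP e3].
  by move: hc; rewrite e2 e1 !eqxx /=; apply/negP; rewrite negbK; apply/eqP; lia.
case: ifP => h1; first rewrite (c1 h1) mulr0.
  by case: ifP => h2; first rewrite (c2 h2) mulr0; rewrite addr0.
by case: ifP => h2; first rewrite (c2 h2) mulr0; rewrite addr0.
Qed.

Lemma solve_copies {d} : cocycle_coef d ->
  (forall k, antisym (d k)) -> (forall k, fin_bisupport (d k)) ->
  (forall p q, d L0 p q = 0) -> (forall p q, d Lb0 p q = 0) ->
  (forall k p q, p.1 != q.1 -> d k p q = 0) ->
  exists r, [/\ antisym r, fin_bisupport r & forall k p q, d k p q = basis_act k r p q].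
Proof.
move=> hd hA hF z0 zb0 mix.
have copy_sol b : exists r : int -> C,
    [/\ forall i, r (- i) = - r i, fin_support r &
        forall m j, copy_coef d b m j = witt_cob r m j].
  apply: witt_H1; last exact: copy_coef_cocycle.
  - by move=> j; rewrite /copy_coef; case: b; [apply: zb0 | apply: z0].
  - by move=> m j; rewrite /copy_coef (_ : m - (m - j) = j); [apply: hA | ring].
  - move=> m; have [N hN] := hF (b, m).
    by exists N => j hj; rewrite /copy_coef hN //; left.
have [rf [rf_odd rf_fin rf_sol]] := copy_sol false.
have [rt [rt_odd rt_fin rt_sol]] := copy_sol true.
pose rho b := if b then rt else rf.
exists (diag_tensor rho); split.
- by apply: diag_tensor_antisym => -[].
- by apply: diag_tensor_fin => -[].
move=> k p q; rewrite basis_act_diag_tensor.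
case: ifP => [/and3P[/eqP ep /eqP eq /eqP epq] | hc]; last first.
  by apply: same_copy_support => //; rewrite hc.
have -> : q = (k.1, k.2 - p.2).
  by case: q eq epq => qb qj /= <- <-; congr pair; ring.
have -> : p = (k.1, p.2) by case: p ep {epq} => pb pi /= <-.
by case: k {ep eq epq} => -[] km /=; [exact: rt_sol | exact: rf_sol].
Qed.

Theorem cocycle_coef_exact {d} : cocycle_coef d ->
  (forall k, antisym (d k)) -> (forall k, fin_bisupport (d k)) ->
  exists r, [/\ antisym r, fin_bisupport r & forall k p q, d k p q = basis_act k r p q].
Proof.
move=> hd hA hF.
set r1 := weight_potential d; set d1 := sub_cob d r1.
have r1A : antisym r1 by exact: weight_potential_antisym.
have r1F : fin_bisupport r1 by exact: weight_potential_fin.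
have hd1 : cocycle_coef d1 by exact: cocycle_coef_sub (cocycle_coef_cob _).
have hA1 k : antisym (d1 k) by exact: antisym_sub (antisym_basis_act _ r1A).
have [z0 zb0] := kill_weight_zero hd hF.
have [c [e0 eb0 mix]] := kill_cross hd1 hA1 z0 zb0.
set d2 := sub_cob d1 (cross_tensor c).
have hd2 : cocycle_coef d2 by exact: cocycle_coef_sub (cocycle_coef_cob _).
have hA2 k : antisym (d2 k).
  exact: antisym_sub (antisym_basis_act _ (cross_tensor_antisym c)).
have hF2 k : fin_bisupport (d2 k).
  apply: fin_bisupport_sub (fin_bisupport_basis_act _ (cross_tensor_fin c)).
  exact: fin_bisupport_sub (fin_bisupport_basis_act _ r1F).
have [r3 [r3A r3F r3E]] := solve_copies hd2 hA2 hF2 e0 eb0 mix.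
exists (fun p q => r1 p q + cross_tensor c p q + r3 p q); split.
- exact: antisym_add (antisym_add r1A (cross_tensor_antisym c)) r3A.
- exact: fin_bisupport_add (fin_bisupport_add r1F (cross_tensor_fin c)) r3F.
- by move=> k p q; rewrite !basis_act_add -r3E /d2 /d1 /sub_cob; ring.
Qed.

Section Kronecker.
Variable K : choiceType.

Lemma sum_delta_seq (s : seq K) (F : K -> C) m0 : uniq s ->
  \sum_(m <- s) F m * (m == m0)%:R = if m0 \in s then F m0 else 0.
Proof.
move=> us; case: ifP => hin.
  rewrite (bigD1_seq m0) //= eqxx mulr1 big1 ?addr0 // => m /negPf ->.
  by rewrite mulr0.
rewrite big1_seq // => m /andP[_ hm]; case: eqP => [e|]; last by rewrite mulr0.
by move: hm; rewrite e hin.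
Qed.

Lemma sum_delta_supp (t : {malg C[K]}) (F : K -> C) m0 :
  \sum_(m <- msupp t) t@_m * F m * (m == m0)%:R = t@_m0 * F m0.
Proof.
rewrite (sum_delta_seq _ (fun m => t@_m * F m) _ (fset_uniq _)).
by case: ifP => // /negbT /mcoeff_outdom ->; rewrite mul0r.
Qed.
End Kronecker.

Lemma e_coef (i j : WWidx) : (e i)@_j = (i == j)%:R.
Proof. by rewrite /e mcoeffU. Qed.

Lemma msupp_e j : msupp (e j) = [fset j]%fset.
Proof. by rewrite /e msuppU oner_eq0. Qed.

Lemma tens_coef a b p q : (tens a b)@_(p, q) = a@_p * b@_q.
Proof.
rewrite /tens raddf_sum /=.
transitivity (\sum_(i <- msupp a) a@_i * b@_q * (i == p)%:R);
  last by rewrite sum_delta_supp.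
apply: eq_bigr => i _; rewrite raddf_sum /=.
transitivity (\sum_(j <- msupp b) b@_j * (a@_i * (i == p)%:R) * (j == q)%:R);
  last by rewrite sum_delta_supp; ring.
apply: eq_bigr => j _; rewrite mcoeffZ mcoeffU xpair_eqE.
by case: (i == p); case: (j == q) => /=; ring.
Qed.

Lemma wedge_coef a b p q : (wedge a b)@_(p, q) = a@_p * b@_q - b@_p * a@_q.
Proof. by rewrite /wedge mcoeffB !tens_coef. Qed.

Lemma brb_coef k i p : (brb k i)@_p =
  if (i.1 == k.1) && (p.1 == k.1) && (i.2 == p.2 - k.2)
  then (2 * k.2 - p.2)%:~R else 0.
Proof.
case: k i p => [kb km] [ib ii] [pb pi]; rewrite /brb /=.
case: (eqVneq kb ib) => [ekb|hne]; last by rewrite mcoeff0.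
subst ib; rewrite /= mcoeffZ e_coef xpair_eqE /= ?eqxx /=.
case: (eqVneq kb pb) => [ekp|hp]; last by rewrite /= mulr0.
subst pb; rewrite ?eqxx /=.
case: (eqVneq (km + ii) pi) => [<-|hq].
  rewrite (_ : ii == km + ii - km) ?mulr1; last by apply/eqP; ring.
  by congr (_%:~R); ring.
by rewrite mulr0; case: eqP => // h; case/eqP: hq; rewrite h; ring.
Qed.

Lemma br_ee k l : br (e k) (e l) = brb k l.
Proof. by rewrite /br !msupp_e !big_seq_fset1 !e_coef !eqxx mulr1 scale1r. Qed.

Lemma br_e_coef x j p :
  (br x (e j))@_p = \sum_(i <- msupp x) x@_i * (brb i j)@_p.
Proof.
rewrite /br raddf_sum /=; apply: eq_bigr => i _.
by rewrite msupp_e big_seq_fset1 mcoeffZ /e mcoeffUU mulr1.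
Qed.

Definition coef (t : WW2) : bicoef := fun p q => t@_(p, q).

Lemma brb_delta_l i p q (m : WWidx * WWidx) :
  (brb i m.1)@_p * (m.2 == q)%:R =
  (if p.1 == i.1 then (2 * i.2 - p.2)%:~R else 0)
  * (m == ((p.1, p.2 - i.2), q))%:R.
Proof.
rewrite brb_coef; case: m => [[mb mi] mj]; rewrite /= !xpair_eqE.
case: (eqVneq p.1 i.1) => h /=; last by rewrite !andbF ?mul0r.
rewrite andbT -h.
by case: (mb == p.1); case: (mi == p.2 - i.2); case: (mj == q) => /=; ring.
Qed.

Lemma brb_delta_r i p q (m : WWidx * WWidx) :
  (m.1 == p)%:R * (brb i m.2)@_q =
  (if q.1 == i.1 then (2 * i.2 - q.2)%:~R else 0)
  * (m == (p, (q.1, q.2 - i.2)))%:R.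
Proof.
rewrite brb_coef; case: m => [mp [mb mi]]; rewrite /= !xpair_eqE.
case: (eqVneq q.1 i.1) => h /=; last by rewrite !andbF ?mulr0 ?mul0r.
rewrite andbT -h.
by case: (mp == p); case: (mb == q.1); case: (mi == q.2 - i.2) => /=; ring.
Qed.

Lemma basis_act_as_sum i (t : WW2) (p q : WWidx) :
  \sum_(m <- msupp t) t@_m * ((brb i m.1)@_p * (m.2 == q)%:R
                              + (m.1 == p)%:R * (brb i m.2)@_q)
  = basis_act i (coef t) p q.
Proof.
under eq_bigr => m _ do rewrite brb_delta_l brb_delta_r mulrDr !mulrA.
rewrite big_split /= !sum_delta_supp /basis_act /coef.
by congr (_ + _); case: ifP => _; rewrite ?mulr0 // mulrC.
Qed.

Lemma act_term_coef x (c : C) (a b p q : WWidx) :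
  (c *: (tens (br x (e a)) (e b) + tens (e a) (br x (e b))))@_(p, q) =
  c * ((\sum_(i <- msupp x) x@_i * (brb i a)@_p) * (b == q)%:R +
       (a == p)%:R * \sum_(i <- msupp x) x@_i * (brb i b)@_q).
Proof.
rewrite mcoeffZ mcoeffD; congr (_ * (_ + _)).
  by rewrite (tens_coef (br x (e a)) (e b) p q) br_e_coef e_coef.
by rewrite (tens_coef (e a) (br x (e b)) p q) br_e_coef e_coef.
Qed.

Lemma act_coef x t (p q : WWidx) :
  (act x t)@_(p, q) = \sum_(i <- msupp x) x@_i * basis_act i (coef t) p q.
Proof.
pose B i (m : WWidx * WWidx) :=
  (brb i m.1)@_p * (m.2 == q)%:R + (m.1 == p)%:R * (brb i m.2)@_q.
rewrite /act raddf_sum /=.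
transitivity (\sum_(m <- msupp t) \sum_(i <- msupp x) x@_i * (t@_m * B i m)).
  apply: eq_bigr => m _.
  rewrite act_term_coef mulr_suml mulr_sumr -big_split /= mulr_sumr.
  apply: eq_bigr => i _; rewrite /B.
  move: (x@_i) (t@_m) ((brb i m.1)@_p) ((brb i m.2)@_q) => X Y A1 A2; ring.
rewrite exchange_big /=; apply: eq_bigr => i _.
by rewrite -mulr_sumr -basis_act_as_sum.
Qed.

Lemma act_e_coef k t (p q : WWidx) : (act (e k) t)@_(p, q) = basis_act k (coef t) p q.
Proof. by rewrite act_coef msupp_e big_seq_fset1 e_coef eqxx mul1r. Qed.

Lemma in_wedge2_antisym {t} : in_wedge2 t -> antisym (coef t).
Proof.
case=> s -> p q; rewrite /coef !raddf_sum /=; apply: eq_bigr => pr _.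
rewrite !wedge_coef.
by move: (pr.1@_p) (pr.1@_q) (pr.2@_p) (pr.2@_q) => A B C' D; ring.
Qed.

Lemma coef_fin t : fin_bisupport (coef t).
Proof.
pose N := (\max_(m <- msupp t) (absz m.1.2 + absz m.2.2))%N.
exists N%:Z => p q h; apply: mcoeff_outdom; apply/negP => hin.
have := @leq_bigmax_seq _ (enum_fset (msupp t)) xpredT
  (fun m : WWidx * WWidx => (absz m.1.2 + absz m.2.2)%N) (p, q) hin isT.
by rewrite -/N /=; case: h => h; lia.
Qed.

(* Conversely, a finitely supported array is the coefficient array of a
   tensor: restrict it to the box of indices |i| <= N. *)
Definition box (N : nat) : seq WWidx :=
  [seq (b, (i%:Z - N%:Z)) | b <- [:: false; true], i <- iota 0 (2 * N).+1].

Lemma box_mem N (p : WWidx) : `|(p.2 : int)| <= N%:Z -> p \in box N.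
Proof.
case: p => b j /= h; apply/allpairsP; exists (b, absz (j + N%:Z)); split => /=.
- by case: b.
- rewrite in_cons mem_iota; case: eqP => //= hne; apply/andP; split; lia.
- by congr (_, _); lia.
Qed.

Definition box2 (N : nat) : {fset WWidx * WWidx} :=
  seq_fset tt [seq (p, q) | p <- box N, q <- box N].

Lemma box2_mem N p q : ((p, q) \in box2 N) = (p \in box N) && (q \in box N).
Proof.
rewrite seq_fsetE; apply/allpairsP/andP; first by case=> [[a b] [/= ha hb [-> ->]]].
by case=> hp hq; exists (p, q).
Qed.

Definition lift_tensor (r : bicoef) (N : nat) : WW2 :=
  [malg m in box2 N => r m.1 m.2].

Lemma lift_tensor_coef r N p q :
  (lift_tensor r N)@_(p, q) = if (p, q) \in box2 N then r p q else 0.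
Proof. by rewrite /lift_tensor mcoeffE. Qed.

(* An antisymmetric array lifts into /\^2 g: it is the sum of the
   (r p q / 2) e_p /\ e_q over the box. *)
Lemma lift_tensor_wedge r N : antisym r -> in_wedge2 (lift_tensor r N).
Proof.
move=> ar; exists [seq ((r m.1 m.2 / 2) *: e m.1, e m.2) | m <- box2 N].
apply/malgP => -[p q]; rewrite lift_tensor_coef raddf_sum big_map /=.
transitivity (\sum_(m <- box2 N) (r m.1 m.2 / 2) * (m == (p, q))%:R
              - \sum_(m <- box2 N) (r m.1 m.2 / 2) * (m == (q, p))%:R); last first.
  rewrite -sumrB; apply: eq_bigr => -[a b] _ /=.
  rewrite wedge_coef !mcoeffZ !e_coef !xpair_eqE.
  move: (r a b / 2) => c.
  by case: (a == p); case: (b == q); case: (a == q); case: (b == p) => /=; ring.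
rewrite !sum_delta_seq ?seq_fset_uniq // !box2_mem [(q \in box N) && _]andbC.
case: ifP => _; last by rewrite subrr.
by rewrite (ar q p); field.
Qed.

Lemma lift_tensor_coef_fin r N0 :
  (forall p q, N0 < `|(p.2 : int)| \/ N0 < `|(q.2 : int)| -> r p q = 0) ->
  forall p q, coef (lift_tensor r (absz N0)) p q = r p q.
Proof.
move=> fr p q; rewrite /coef lift_tensor_coef box2_mem.
case: ifP => // hin; symmetry; apply: fr.
case: (lerP `|(p.2 : int)| (absz N0)%:Z) => hp; last by left; lia.
case: (lerP `|(q.2 : int)| (absz N0)%:Z) => hq; last by right; lia.
by move: hin; rewrite !box_mem.
Qed.

Lemma basis_expansion (x : WW) : x = \sum_(k <- msupp x) x@_k *: e k.
Proof.
rewrite {1}(monalgE x); apply: eq_bigr => k _.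
by apply/malgP => j; rewrite mcoeffU mcoeffZ e_coef mulr_natr.
Qed.

Section LinearMap.
Variable delta : WW -> WW2.
Hypothesis delta_linear : forall (a : C) (x y : WW),
  delta (a *: x + y) = a *: delta x + delta y.

Lemma linear0 : delta 0 = 0.
Proof.
apply: (addrI (delta 0)).
by rewrite addr0 -{1}(scale1r (delta 0)) -delta_linear scale1r addr0.
Qed.

Lemma linear_scale (a : C) (x : WW) : delta (a *: x) = a *: delta x.
Proof. by have := delta_linear a x 0; rewrite addr0 linear0 addr0. Qed.

Lemma linear_sum (s : seq WWidx) (c : WWidx -> C) :
  delta (\sum_(k <- s) c k *: e k) = \sum_(k <- s) c k *: delta (e k).
Proof.
elim: s => [|a s IH]; first by rewrite !big_nil linear0.
by rewrite !big_cons delta_linear IH.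
Qed.

Lemma cocycle_coef_of :
  (forall x y : WW, delta (br x y) = act x (delta y) - act y (delta x)) ->
  cocycle_coef (fun k => coef (delta (e k))).
Proof.
move=> hcoc k l p q.
rewrite /coef -!act_e_coef -mcoeffB -hcoc br_ee /brb.
by case: ifP => _; rewrite ?linear0 ?mcoeff0 // linear_scale mcoeffZ.
Qed.

End LinearMap.

Theorem theorem2 (delta : WW -> WW2)
  (delta_linear : forall (a : C) (x y : WW),
      delta (a *: x + y) = a *: delta x + delta y)
  (delta_wedge : forall x : WW, in_wedge2 (delta x))
  (delta_cocycle : forall x y : WW,
      delta (br x y) = act x (delta y) - act y (delta x)) :
  exists r : WW2, in_wedge2 r /\ forall x : WW, delta x = act x r.
Proof.
have [r [r_anti [N r_fin] r_cob]] := cocycle_coef_exact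
  (cocycle_coef_of _ delta_linear delta_cocycle)
  (fun k => in_wedge2_antisym (delta_wedge (e k))) (fun k => coef_fin _).
exists (lift_tensor r (absz N)); split; first exact: lift_tensor_wedge.
move=> x; apply/malgP => -[p q].
rewrite {1}(basis_expansion x) (linear_sum _ delta_linear) raddf_sum /= act_coef.
apply: eq_bigr => k _; rewrite mcoeffZ; congr (_ * _).
have := r_cob k p q; rewrite /= {1}/coef => ->.
by apply: basis_act_ext => p' q'; rewrite lift_tensor_coef_fin.
Qed.
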